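(* Let $X$ be a chain connected uniform space. Each of the following conditions implies that $X$ is joinable: (1) $\mathrm{pro}\text{-}\pi_1(X,x_0)$ is trivial for some $x_0\in X$; (2) $X$ has a countable base of entourages and $\varprojlim^1\mathrm{pro}\text{-}\pi_1(X,x_0)=0$ for some $x_0\in X$.
   Context: $R(X,E)$ is the Rips complex of $X$ (vertex set $X$, simplices the finite $F$ with $F\times F\subset E$). $X$ is chain connected if for each entourage $E$ any two points are joined by a sequence $x_0,\dots,x_n$ with $(x_i,x_{i+1})\in E$. $\mathrm{pro}\text{-}\pi_1(X,x_0)=\{\pi_1(R(X,E),x_0)\}_E$ with inclusion-induced bonding maps, entourages ordered by reverse inclusion; it is trivial if for every $E$ there is $F\subset E$ with $\pi_1(R(X,F),x_0)\to\pi_1(R(X,E),x_0)$ trivial. For a decreasing countable base $E_1\supset E_2\supset\cdots$ and $G_n=\pi_1(R(X,E_n),x_0)$, $\varprojlim^1\{G_n\}=0$ means: for every sequence $g_n\in G_n$ there is a sequence $h_n\in G_n$ with $g_k=h_k\cdot(\text{image of }h_{k+1})^{-1}$ in $G_k$ for all $k$. A generalized path from $x$ to $y$ is a family $\{[c_E]\}_E$ of homotopy classes rel. end-points of paths from $x$ to $y$ in $R(X,E)$ with $c_F\simeq c_E$ rel. end-points in $R(X,E)$ for $F\subset E$; $X$ is joinable if any two points are joined by a generalized path. *)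

From Stdlib Require Import List Relations.
Import ListNotations.
Set Implicit Arguments.

Section Defs.
Variable X : Type.

Record is_uniformity (ent : (X -> X -> Prop) -> Prop) : Prop := {
  unif_nonempty : exists E, ent E;
  unif_refl : forall E, ent E -> forall x, E x x;
  unif_super : forall E F : X -> X -> Prop,
      ent E -> (forall x y, E x y -> F x y) -> ent F;
  unif_inter : forall E F, ent E -> ent F -> ent (fun x y => E x y /\ F x y);
  unif_inv : forall E, ent E -> ent (fun x y => E y x);
  unif_comp : forall E, ent E ->
      exists F, ent F /\ forall x y z, F x y -> F y z -> E x z
}.

Definition subrel (F E : X -> X -> Prop) : Prop := forall x y, F x y -> E x y.

Inductive Chain (R : X -> X -> Prop) : list X -> Prop :=
| Chain_nil : Chain R []
| Chain_one : forall a, Chain R [a]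
| Chain_cons : forall a b l, R a b -> Chain R (b :: l) -> Chain R (a :: b :: l).

Definition chain_connected (ent : (X -> X -> Prop) -> Prop) : Prop :=
  forall E, ent E -> forall x y : X,
    exists l : list X, Chain E l /\ hd_error l = Some x /\ last l x = y.

Definition rips_simplex (E : X -> X -> Prop) (F : list X) : Prop :=
  forall a b, In a F -> In b F -> E a b.

Definition rips_edge (E : X -> X -> Prop) (a b : X) : Prop :=
  rips_simplex E [a; b].

(* Edge paths in R(X,E) from x to y: vertex sequences, consecutive vertices
   spanning a simplex (equal or adjacent). *)
Definition epath (E : X -> X -> Prop) (x y : X) (l : list X) : Prop :=
  Chain (rips_edge E) l /\ hd_error l = Some x /\ last l x = y.

Inductive ep_move (E : X -> X -> Prop) : list X -> list X -> Prop :=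
| ep_stutter : forall l1 a l2, ep_move E (l1 ++ a :: a :: l2) (l1 ++ a :: l2)
| ep_triangle : forall l1 a b c l2, rips_simplex E [a; b; c] ->
    ep_move E (l1 ++ a :: b :: c :: l2) (l1 ++ a :: c :: l2).

Definition ep_homotopic (E : X -> X -> Prop) : list X -> list X -> Prop :=
  clos_refl_sym_trans (list X) (ep_move E).

Definition loop_mul (p q : list X) : list X := p ++ tl q.
Definition loop_inv (p : list X) : list X := rev p.

Definition pro_pi1_trivial (ent : (X -> X -> Prop) -> Prop) (x0 : X) : Prop :=
  forall E, ent E -> exists F, ent F /\ subrel F E /\
    forall p, epath F x0 x0 p -> ep_homotopic E p [x0].

Definition decreasing_countable_base (ent : (X -> X -> Prop) -> Prop)
    (B : nat -> X -> X -> Prop) : Prop :=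
  (forall n, ent (B n)) /\ (forall n, subrel (B (S n)) (B n)) /\
  (forall E, ent E -> exists n, subrel (B n) E).

(* lim^1 of G_n = pi_1(R(X,B n),x0) vanishes. *)
Definition lim1_zero (B : nat -> X -> X -> Prop) (x0 : X) : Prop :=
  forall g : nat -> list X, (forall n, epath (B n) x0 x0 (g n)) ->
  exists h : nat -> list X, (forall n, epath (B n) x0 x0 (h n)) /\
    forall k, ep_homotopic (B k) (g k) (loop_mul (h k) (loop_inv (h (S k)))).

Definition generalized_path (ent : (X -> X -> Prop) -> Prop) (x y : X)
    (c : (X -> X -> Prop) -> list X) : Prop :=
  (forall E, ent E -> epath E x y (c E)) /\
  (forall E F, ent E -> ent F -> subrel F E -> ep_homotopic E (c F) (c E)).

Definition joinable (ent : (X -> X -> Prop) -> Prop) : Prop :=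
  forall x y : X, exists c, generalized_path ent x y c.

End Defs.

(* Edge paths in the Rips complexes form a groupoid up to homotopy, and chain
   connectedness lets one move base points.  If the bonding maps into
   pi_1(R(X,E)) kill all loops from a finer R(X,F), then any two F-paths from
   x to y are E-homotopic, so choosing one F-path for each E gives a
   generalized path.  Under lim^1 = 0 one corrects arbitrary paths
   w_n : x0 -> z in R(X,B_n) by loops h_n so that the corrected paths
   rev h_n ++ w_n are compatible along the tower; joining two such towers
   gives a compatible sequence of paths x -> y, hence a generalized path. *)
From Stdlib Require Import List Relations Setoid Morphisms ClassicalEpsilon PeanoNat.
Import ListNotations.

Lemma choice_on {A B : Type} (b : B) (D : A -> Prop) (P : A -> B -> Prop) :
  (forall a, D a -> exists y, P a y) -> exists f : A -> B, forall a, D a -> P a (f a).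
Proof.
  intros H. exists (fun a => epsilon (inhabits b) (P a)).
  intros a Ha. exact (epsilon_spec _ _ (H a Ha)).
Qed.

Lemma clos_rst_map {A B : Type} {R : relation A} {S : relation B} (f : A -> B) :
  (forall a a', R a a' -> S (f a) (f a')) ->
  forall a a', clos_refl_sym_trans A R a a' -> clos_refl_sym_trans B S (f a) (f a').
Proof.
  intros Hf a a' H; induction H.
  - apply rst_step, Hf; assumption.
  - apply rst_refl.
  - apply rst_sym; assumption.
  - eapply rst_trans; eassumption.
Qed.

Section EdgePaths.
Context {X : Type}.
Implicit Types (R S E F : X -> X -> Prop) (l p q : list X) (a b c x y z : X).

Lemma Chain_mono R S l : (forall a b, R a b -> S a b) -> Chain R l -> Chain S l.
Proof. intros H C; induction C; constructor; auto. Qed.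

Lemma Chain_app R l1 a l2 :
  Chain R (l1 ++ [a]) -> Chain R (a :: l2) -> Chain R (l1 ++ a :: l2).
Proof.
  induction l1 as [|b [|c l1] IH]; simpl; intros C1 C2; auto.
  - inversion C1; subst; constructor; auto.
  - inversion C1; subst; constructor; auto.
Qed.

Lemma Chain_rev R l : (forall a b, R a b -> R b a) -> Chain R l -> Chain R (rev l).
Proof.
  intros Hsym C; induction C; simpl; try constructor.
  simpl in IHC; rewrite <- app_assoc; apply Chain_app; auto.
  repeat constructor; auto.
Qed.

Lemma rips_simplex_mono {F E l} : subrel F E -> rips_simplex F l -> rips_simplex E l.
Proof. unfold rips_simplex, subrel; auto. Qed.

Lemma rips_simplex_incl {E l l'} : incl l l' -> rips_simplex E l' -> rips_simplex E l.
Proof. unfold rips_simplex, incl; auto. Qed.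

Lemma rips_edge_of E a b : E a a -> E b b -> E a b -> E b a -> rips_edge E a b.
Proof.
  intros Ha Hb Hab Hba u v Hu Hv; simpl in *.
  destruct Hu as [<-|[<-|[]]], Hv as [<-|[<-|[]]]; assumption.
Qed.

Lemma rips_edge_sym E a b : rips_edge E a b -> rips_edge E b a.
Proof. apply rips_simplex_incl; intros u; simpl; tauto. Qed.

Lemma ep_move_app E p q l l' : ep_move E l l' -> ep_move E (p ++ l ++ q) (p ++ l' ++ q).
Proof.
  intros [l1 a l2 | l1 a b c l2 Habc]; rewrite !app_assoc, <- !app_assoc with (l := p ++ l1);
    simpl; constructor; assumption.
Qed.

Lemma ep_move_rev E l l' : ep_move E l l' -> ep_move E (rev l) (rev l').
Proof.
  intros [l1 a l2 | l1 a b c l2 Habc]; rewrite !rev_app_distr; simpl; rewrite <- !app_assoc;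
    simpl; constructor.
  apply (rips_simplex_incl (l' := [a; b; c])); [intros u; simpl; tauto | exact Habc].
Qed.

Lemma ep_move_mono F E l l' : subrel F E -> ep_move F l l' -> ep_move E l l'.
Proof.
  intros HFE [l1 a l2 | l1 a b c l2 Habc]; constructor.
  exact (rips_simplex_mono HFE Habc).
Qed.

#[export] Instance ep_homotopic_equiv E : Equivalence (ep_homotopic E).
Proof.
  split; [intros l; apply rst_refl | intros l l'; apply rst_sym
         | intros l l' l''; apply rst_trans].
Qed.

#[export] Instance app_ep_homotopic E :
  Proper (ep_homotopic E ==> ep_homotopic E ==> ep_homotopic E) (@app X).
Proof.
  intros p p' Hp q q' Hq; transitivity (p' ++ q).
  - exact (clos_rst_map (fun l => l ++ q) (fun l l' => ep_move_app E [] q l l') _ _ Hp).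
  - refine (clos_rst_map (fun l => p' ++ l) _ _ _ Hq).
    intros l l' H; generalize (ep_move_app E p' [] l l' H); rewrite !app_nil_r; auto.
Qed.

#[export] Instance rev_ep_homotopic E : Proper (ep_homotopic E ==> ep_homotopic E) (@rev X).
Proof. intros l l'; apply clos_rst_map, ep_move_rev. Qed.

Lemma ep_homotopic_mono {F E l l'} : subrel F E -> ep_homotopic F l l' -> ep_homotopic E l l'.
Proof. intros HFE; apply (clos_rst_map id); eauto using ep_move_mono. Qed.

Lemma epath_hd {E x y p} : epath E x y p -> exists t, p = x :: t.
Proof. intros [_ [H _]]; destruct p; inversion H; eauto. Qed.

Lemma epath_last {E x y p} : epath E x y p -> exists s, p = s ++ [y].
Proof.
  intros Hp; destruct (epath_hd Hp) as [t ->]; destruct Hp as [_ [_ H]].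
  exists (removelast (x :: t)); rewrite <- H; apply app_removelast_last; discriminate.
Qed.

Lemma epath_mono {F E x y p} : subrel F E -> epath F x y p -> epath E x y p.
Proof.
  intros HFE [C Hends]; split; [|exact Hends].
  apply (Chain_mono _ _ _ (fun a b => rips_simplex_mono HFE)), C.
Qed.

Lemma epath_app {E x y z p q} :
  E y y -> epath E x y p -> epath E y z q -> epath E x z (p ++ q).
Proof.
  intros Hy Hp Hq.
  destruct (epath_last Hp) as [s Hs], (epath_hd Hq) as [t Ht], (epath_hd Hp) as [? ->].
  split; [|split; [reflexivity|]].
  - rewrite Hs, Ht, <- app_assoc; apply Chain_app; [rewrite <- Hs; apply Hp|].
    constructor; [apply rips_edge_of; assumption | rewrite <- Ht; apply Hq].
  - destruct (epath_last Hq) as [u ->]; rewrite app_assoc; apply last_last.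
Qed.

Lemma epath_rev {E x y p} : epath E x y p -> epath E y x (rev p).
Proof.
  intros Hp; destruct (epath_last Hp) as [s Hs].
  split; [|split].
  - apply Chain_rev; [apply rips_edge_sym | apply Hp].
  - rewrite Hs, rev_app_distr; reflexivity.
  - destruct (epath_hd Hp) as [t ->]; apply last_last.
Qed.

Lemma epath_unit_l E' {E x y p} : epath E x y p -> ep_homotopic E' (x :: p) p.
Proof. intros Hp; destruct (epath_hd Hp) as [t ->]; apply rst_step, (ep_stutter E' []). Qed.

Lemma epath_unit_r E' {E x y p} : epath E x y p -> ep_homotopic E' (p ++ [y]) p.
Proof.
  intros Hp; destruct (epath_last Hp) as [s ->]; rewrite <- app_assoc.
  apply rst_step, (ep_stutter E' s y []).
Qed.

Lemma loop_mul_homotopic E' {E x y z p q} :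
  epath E x y p -> epath E y z q -> ep_homotopic E' (loop_mul p q) (p ++ q).
Proof.
  intros Hp Hq; destruct (epath_last Hp) as [s ->], (epath_hd Hq) as [t ->].
  unfold loop_mul; rewrite <- !app_assoc; symmetry; apply rst_step, ep_stutter.
Qed.

(* A backtrack a b a collapses through the degenerate simplex [a; b; a]. *)
Lemma epath_cancel {E x y p} : epath E x y p -> ep_homotopic E (p ++ rev p) [x].
Proof.
  intros Hp; destruct (epath_hd Hp) as [t ->]; destruct Hp as [C _].
  revert x C; induction t as [|b t IH]; intros a C.
  - apply rst_step, (ep_stutter E []).
  - inversion C as [| |? ? ? Hab Cb]; subst.
    replace ((a :: b :: t) ++ rev (a :: b :: t))
      with ([a] ++ ((b :: t) ++ rev (b :: t)) ++ [a])
      by (simpl; rewrite <- !app_assoc; reflexivity).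
    rewrite (IH _ Cb); simpl.
    transitivity [a; a]; apply rst_step.
    + apply (@ep_triangle _ E [] a b a []), (rips_simplex_incl (l' := [a; b]));
        [intros u; simpl; tauto | exact Hab].
    + apply (ep_stutter E []).
Qed.

Lemma epath_cancel_rev {E x y p} : epath E x y p -> ep_homotopic E (rev p ++ p) [y].
Proof.
  intros Hp; rewrite <- (rev_involutive p) at 2; exact (epath_cancel (epath_rev Hp)).
Qed.

Definition trivial_pi1_map F E x : Prop := forall p, epath F x x p -> ep_homotopic E p [x].

Lemma homotopic_of_trivial_pi1_map F E x y p q :
  subrel F E -> F y y -> trivial_pi1_map F E x ->
  epath F x y p -> epath F x y q -> ep_homotopic E p q.
Proof.
  intros HFE Hy Htriv Hp Hq.
  rewrite <- (epath_unit_r E Hp), <- (epath_cancel_rev (epath_mono HFE Hq)), app_assoc.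
  rewrite (Htriv _ (epath_app Hy Hp (epath_rev Hq))).
  exact (epath_unit_l E Hq).
Qed.

Lemma subrel_antitone (B : nat -> X -> X -> Prop) :
  (forall n, subrel (B (S n)) (B n)) -> forall i j, i <= j -> subrel (B j) (B i).
Proof. intros HB i j Hij; induction Hij; unfold subrel in *; auto. Qed.

Definition coherent (B : nat -> X -> X -> Prop) (P : nat -> list X) : Prop :=
  forall n, ep_homotopic (B n) (P n) (P (S n)).

Lemma coherent_le B P :
  (forall n, subrel (B (S n)) (B n)) -> coherent B P ->
  forall i j, i <= j -> ep_homotopic (B i) (P i) (P j).
Proof.
  intros HB HP i j Hij; induction Hij; [reflexivity|].
  rewrite IHHij; apply (ep_homotopic_mono (subrel_antitone B HB _ _ Hij)), HP.
Qed.

End EdgePaths.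

Section UniformSpace.
Context {X : Type} (ent : (X -> X -> Prop) -> Prop).
Hypotheses (Hunif : is_uniformity ent) (Hcc : chain_connected ent).

Lemma epath_exists F x y : ent F -> exists l, epath F x y l.
Proof.
  intros HF.
  assert (Hsym : ent (fun a b => F a b /\ F b a))
    by (apply (unif_inter Hunif); [|apply (unif_inv Hunif)]; assumption).
  destruct (Hcc _ Hsym x y) as [l [C Hends]]; exists l; split; [|exact Hends].
  apply (Chain_mono _ _ _ (fun a b '(conj Hab Hba) => rips_edge_of _ _ _
           (unif_refl Hunif _ HF a) (unif_refl Hunif _ HF b) Hab Hba)), C.
Qed.

Lemma trivial_pi1_map_basepoint F E x0 x :
  ent F -> subrel F E -> trivial_pi1_map F E x0 -> trivial_pi1_map F E x.
Proof.
  intros HF HFE Htriv p Hp.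
  assert (Hx : F x x) by exact (unif_refl Hunif _ HF x).
  destruct (epath_exists F x0 x HF) as [q Hq].
  assert (Hqp : ep_homotopic E (q ++ p) q)
    by exact (homotopic_of_trivial_pi1_map _ _ _ _ _ _ HFE Hx Htriv (epath_app Hx Hq Hp) Hq).
  pose proof (epath_cancel_rev (epath_mono HFE Hq)) as Hq_cancel.
  transitivity ((rev q ++ q) ++ p).
  - rewrite Hq_cancel; symmetry; exact (epath_unit_l E Hp).
  - rewrite <- app_assoc, Hqp; exact Hq_cancel.
Qed.

Lemma joinable_of_pro_pi1_trivial x0 : pro_pi1_trivial ent x0 -> joinable ent.
Proof.
  intros Htriv x y.
  destruct (choice_on [] ent (fun E l => exists F, ent F /\ subrel F E /\
              trivial_pi1_map F E x /\ epath F x y l)) as [c Hc].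
  { intros E HE; destruct (Htriv E HE) as [F [HF [HFE HF0]]].
    destruct (epath_exists F x y HF) as [l Hl].
    exists l, F; split; [exact HF|]; split; [exact HFE|]; split; [|exact Hl].
    exact (trivial_pi1_map_basepoint F E x0 x HF HFE HF0). }
  exists c; split.
  - intros E HE; destruct (Hc E HE) as [F [_ [HFE [_ Hl]]]]; exact (epath_mono HFE Hl).
  - intros E G HE HG HGE.
    destruct (Hc E HE) as [FE [HFE [HFEE [HtE HcE]]]].
    destruct (Hc G HG) as [FG [HFG [HFGG [HtG HcG]]]].
    (* Both c_G and c_E are homotopic to a path in the finer entourage FG /\ FE. *)
    destruct (epath_exists _ x y (unif_inter Hunif _ _ HFG HFE)) as [p Hp].
    pose proof (epath_mono (fun a b (Hab : FG a b /\ FE a b) => proj2 Hab) Hp) as HpE.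
    pose proof (epath_mono (fun a b (Hab : FG a b /\ FE a b) => proj1 Hab) Hp) as HpG.
    rewrite (homotopic_of_trivial_pi1_map _ _ _ _ _ _ HFEE (unif_refl Hunif _ HFE y) HtE HcE HpE).
    apply (ep_homotopic_mono HGE).
    exact (homotopic_of_trivial_pi1_map _ _ _ _ _ _ HFGG (unif_refl Hunif _ HFG y) HtG HcG HpG).
Qed.

Lemma coherent_paths_of_lim1_zero B x0 :
  (forall n, ent (B n)) -> (forall n, subrel (B (S n)) (B n)) -> lim1_zero B x0 ->
  forall z, exists W : nat -> list X, (forall n, epath (B n) x0 z (W n)) /\ coherent B W.
Proof.
  intros HBent HB Hlim z.
  assert (Hrefl : forall n a, B n a a) by (intros n a; exact (unif_refl Hunif _ (HBent n) a)).
  destruct (choice_on [] (fun _ => True) (fun n l => epath (B n) x0 z l)) as [w Hw].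
  { intros n _; exact (epath_exists _ x0 z (HBent n)). }
  assert (Hw' : forall n, epath (B n) x0 z (w (S n)))
    by (intros n; exact (epath_mono (HB n) (Hw _ I))).
  destruct (Hlim (fun n => w n ++ rev (w (S n)))) as [h [Hh Hgh]].
  { intros n; exact (epath_app (Hrefl n z) (Hw n I) (epath_rev (Hw' n))). }
  cbv beta in Hgh; unfold loop_inv in Hgh.
  exists (fun n => rev (h n) ++ w n); split.
  - intros n; exact (epath_app (Hrefl n x0) (epath_rev (Hh n)) (Hw n I)).
  - (* h_n^-1 w_n ~ h_n^-1 g_n w_(n+1) ~ h_n^-1 h_n h_(n+1)^-1 w_(n+1) *)
    intros n; cbv beta.
    pose proof (epath_rev (epath_mono (HB n) (Hh (S n)))) as Hh'.
    transitivity (rev (h n) ++ (w n ++ rev (w (S n))) ++ w (S n)).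
    + rewrite <- app_assoc, (epath_cancel_rev (Hw' n)), (epath_unit_r _ (Hw n I)).
      reflexivity.
    + rewrite (Hgh n), (loop_mul_homotopic _ (Hh n) Hh').
      rewrite !app_assoc, (epath_cancel_rev (Hh n)), <- app_assoc.
      exact (epath_unit_l _ (epath_app (Hrefl n x0) Hh' (Hw' n))).
Qed.

Lemma generalized_path_of_coherent B x y P :
  (forall n, subrel (B (S n)) (B n)) -> (forall E, ent E -> exists n, subrel (B n) E) ->
  (forall n, epath (B n) x y (P n)) -> coherent B P -> exists c, generalized_path ent x y c.
Proof.
  intros HB Hbase HP Hcoh.
  destruct (choice_on 0 ent (fun E n => subrel (B n) E) Hbase) as [N HN].
  exists (fun E => P (N E)); split.
  - intros E HE; exact (epath_mono (HN E HE) (HP (N E))).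
  - intros E F HE HF HFE.
    destruct (Nat.le_ge_cases (N F) (N E)) as [Hle|Hle].
    + apply (ep_homotopic_mono (fun a b Hab => HFE a b (HN F HF a b Hab))).
      exact (coherent_le B P HB Hcoh _ _ Hle).
    + symmetry; apply (ep_homotopic_mono (HN E HE)), (coherent_le B P HB Hcoh _ _ Hle).
Qed.

Lemma joinable_of_lim1_zero B x0 :
  decreasing_countable_base ent B -> lim1_zero B x0 -> joinable ent.
Proof.
  intros [HBent [HB Hbase]] Hlim x y.
  destruct (coherent_paths_of_lim1_zero B x0 HBent HB Hlim x) as [Wx [HWx Hcx]].
  destruct (coherent_paths_of_lim1_zero B x0 HBent HB Hlim y) as [Wy [HWy Hcy]].
  apply (generalized_path_of_coherent B x y (fun n => rev (Wx n) ++ Wy n) HB Hbase).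
  - intros n; exact (epath_app (unif_refl Hunif _ (HBent n) x0) (epath_rev (HWx n)) (HWy n)).
  - intros n; cbv beta; rewrite (Hcx n), (Hcy n); reflexivity.
Qed.

End UniformSpace.

Theorem mainTheorem10 (X : Type) (ent : (X -> X -> Prop) -> Prop)
  (Hunif : is_uniformity ent) (Hcc : chain_connected ent) :
  ((exists x0 : X, pro_pi1_trivial ent x0) -> joinable ent) /\
  ((exists (B : nat -> X -> X -> Prop) (x0 : X),
      decreasing_countable_base ent B /\ lim1_zero B x0) -> joinable ent).
Proof.
  split.
  - intros [x0 Htriv]; exact (joinable_of_pro_pi1_trivial ent Hunif Hcc x0 Htriv).
  - intros [B [x0 [HB Hlim]]]; exact (joinable_of_lim1_zero ent Hunif Hcc B x0 HB Hlim).
Qed.
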